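(* Let $\mathcal{G}$ be a group prevariety over a finite alphabet $A$, let $\alpha:A^*\to M$ be a surjective morphism into a finite monoid, and let $N$ be the $\mathcal{G}$-kernel of $\alpha$. Then: (1) every $\mathcal{G}$-orbit for $\alpha$ is a subset of $N$; (2) $N$ is exactly the $\mathcal{G}$-orbit of $1_M$ for $\alpha$.
   Context: Fix a finite alphabet $A$. A prevariety is a class of regular languages over $A$ containing $\emptyset$ and $A^*$, closed under union, intersection, complement, and under the quotients $u^{-1}L=\{w\mid uw\in L\}$ and $Lu^{-1}=\{w\mid wu\in L\}$; a group prevariety is a prevariety all of whose languages are recognized by morphisms into finite groups. $L_1$ is $\mathcal{G}$-separable from $L_2$ if some $K\in\mathcal{G}$ satisfies $L_1\subseteq K$, $K\cap L_2=\emptyset$. For $\alpha:A^*\to M$: $(s,t)\in M^2$ is a $\mathcal{G}$-pair if $\alpha^{-1}(s)$ is not $\mathcal{G}$-separable from $\alpha^{-1}(t)$; for an idempotent $e\in M$, the $\mathcal{G}$-orbit of $e$ is $\{ese\mid (e,s)\text{ is a }\mathcal{G}\text{-pair}\}$; the $\mathcal{G}$-orbits for $\alpha$ are the $\mathcal{G}$-orbits of the idempotents of $M$; the $\mathcal{G}$-kernel of $\alpha$ is the set of $s\in M$ such that $\{\varepsilon\}$ is not $\mathcal{G}$-separable from $\alpha^{-1}(s)$. *)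

From mathcomp Require Import all_boot all_fingroup.
Set Implicit Arguments. Unset Strict Implicit. Unset Printing Implicit Defensive.

Definition lang (A : finType) := seq A -> bool.

Definition is_monoid_morphism (A : finType) (M : Type) (mul : M -> M -> M) (one : M)
  (h : seq A -> M) : Prop :=
  h [::] = one /\ forall u v, h (u ++ v) = mul (h u) (h v).

Definition monoid_laws (M : Type) (mul : M -> M -> M) (one : M) : Prop :=
  (forall x y z, mul x (mul y z) = mul (mul x y) z) /\
  (forall x, mul one x = x) /\ (forall x, mul x one = x).

Definition regular (A : finType) (L : lang A) : Prop :=
  exists (Q : finType) (delta : Q -> A -> Q) (q0 : Q) (F : {set Q}),
    forall w, L w = (foldl delta q0 w \in F).

Definition prevariety (A : finType) (C : lang A -> Prop) : Prop :=
  (forall L, C L -> regular L) /\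
  C (fun _ => false) /\ C (fun _ => true) /\
  (forall L1 L2, C L1 -> C L2 -> C (fun w => L1 w || L2 w)) /\
  (forall L1 L2, C L1 -> C L2 -> C (fun w => L1 w && L2 w)) /\
  (forall L, C L -> C (fun w => ~~ L w)) /\
  (forall L u, C L -> C (fun w => L (u ++ w))) /\
  (forall L u, C L -> C (fun w => L (w ++ u))).

Definition group_recognized (A : finType) (L : lang A) : Prop :=
  exists (gT : finGroupType) (h : seq A -> gT) (F : {set gT}),
    is_monoid_morphism (fun x y : gT => (x * y)%g) 1%g h /\
    forall w, L w = (h w \in F).

Definition group_prevariety (A : finType) (C : lang A -> Prop) : Prop :=
  prevariety C /\ forall L, C L -> group_recognized L.

Definition separable (A : finType) (C : lang A -> Prop) (L1 L2 : lang A) : Prop :=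
  exists K, C K /\ (forall w, L1 w -> K w) /\ (forall w, K w -> ~~ L2 w).

Section Pairs.
Variables (A : finType) (C : lang A -> Prop) (M : finType) (alpha : seq A -> M).

Definition preim (s : M) : lang A := fun w => alpha w == s.

Definition C_pair (s t : M) : Prop := ~ separable C (preim s) (preim t).

(* The C-orbit of e (meaningful for idempotents e). *)
Definition C_orbit (mul : M -> M -> M) (e : M) (x : M) : Prop :=
  exists s, C_pair e s /\ x = mul (mul e s) e.

Definition C_kernel (s : M) : Prop :=
  ~ separable C (fun w => w == [::]) (preim s).
End Pairs.

From Pilot Require Import Defs.
From mathcomp Require Import all_boot all_fingroup.
From Stdlib Require Import Classical.
Set Implicit Arguments. Unset Strict Implicit. Unset Printing Implicit Defensive.

(* Let e be idempotent, (e, s) a C-pair, and suppose K in C separates {ε}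
   from α⁻¹(ese).  K is recognised by a morphism h into a finite group, and
   every w in α⁻¹(e) has a partner v in α⁻¹(e) with h(v) = h(w)⁻¹ (a suitable
   power of w).  Fixing z in α⁻¹(e) with h(z) = 1, the quotients z⁻¹ K v⁻¹,
   one for each value h(v) with v in α⁻¹(e), are finitely many and their union
   contains α⁻¹(e); it avoids α⁻¹(s) because α(z w v) = e α(w) e.  This
   contradicts (e, s) being a C-pair, so ese lies in the kernel.  Conversely
   ε ∈ α⁻¹(1), so every kernel element s makes (1, s) a C-pair and s = 1s1. *)

Section PowerWords.
Variable A : finType.

Lemma gmorph_flatten_nseq (gT : finGroupType) (h : seq A -> gT) k u :
  is_monoid_morphism (fun x y : gT => (x * y)%g) 1%g h ->
  h (flatten (nseq k u)) = (h u ^+ k)%g.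
Proof.
by move=> [h0 hM]; elim: k => [|k IH] //=; rewrite hM IH expgS.
Qed.

Lemma morph_flatten_nseq_idem (M : Type) (mul : M -> M -> M) one
    (alpha : seq A -> M) e k u :
  is_monoid_morphism mul one alpha -> mul e e = e -> alpha u = e ->
  alpha (flatten (nseq k.+1 u)) = e.
Proof.
move=> [_ aM] He Hu; elim: k => [|k IH]; first by rewrite /= cats0.
by rewrite [flatten _]/= aM IH Hu He.
Qed.

Lemma idempotent_preimage_inverse (M : Type) (mul : M -> M -> M) one
    (alpha : seq A -> M) (gT : finGroupType) (h : seq A -> gT) e w :
  is_monoid_morphism mul one alpha ->
  is_monoid_morphism (fun x y : gT => (x * y)%g) 1%g h ->
  mul e e = e -> alpha w = e ->
  exists2 v, alpha v = e & h v = (h w)^-1%g.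
Proof.
move=> Halpha Hh He Hw; exists (flatten (nseq (#[h w]%g.-1 + #[h w]%g) w)).
  rewrite -[in X in nseq X](prednK (order_gt0 (h w))) addnS.
  by apply: morph_flatten_nseq_idem Halpha He Hw.
by rewrite gmorph_flatten_nseq // expgD expg_order mulg1 -invg_expg.
Qed.

End PowerWords.

Section PrevarietyClosure.
Variables (A : finType) (C : lang A -> Prop).
Hypothesis HC : prevariety C.

Lemma prevariety_quotient K u v : C K -> C (fun w => K (u ++ w ++ v)).
Proof.
move: HC => [_ [_ [_ [_ [_ [_ [HQl HQr]]]]]]] CK.
exact: HQr (fun w => K (u ++ w)) v (HQl K u CK).
Qed.

Lemma prevariety_union_fin (I : finType) (Q : I -> Prop) (P : I -> lang A) :
  (forall i, Q i -> exists2 L, C L & L =1 P i) ->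
  exists2 L, C L & forall w, L w <-> exists2 i, Q i & P i w.
Proof.
move: HC => [_ [C0 [_ [CU _]]]] CP.
suff /(_ (enum I)) [L CL HL] : forall s : seq I,
    exists2 L, C L & forall w, L w <-> exists i, [/\ i \in s, Q i & P i w].
  exists L => // w; rewrite HL.
  by split=> [[i [_ Qi Pi]] | [i Qi Pi]]; exists i; rewrite ?mem_enum.
elim=> [|i s [Ls CLs HLs]].
  by exists (fun _ => false) => // w; split=> // [[i []]].
have [Li CLi HLi] : exists2 Li, C Li & forall w, Li w <-> Q i /\ P i w.
  have [Qi | nQi] := classic (Q i).
    have [Li CLi HLi] := CP i Qi.
    by exists Li => // w; rewrite HLi; split=> [|[]].
  by exists (fun _ => false) => // w; split=> // [[]].
exists (fun w => Li w || Ls w) => [|w]; first exact: CU.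
split.
  case/orP=> [/HLi [Qi Pi] | /HLs [j [js Qj Pj]]]; first by exists i; rewrite inE eqxx.
  by exists j; rewrite inE js orbT.
case=> j [/predU1P[->|js] Qj Pj]; apply/orP; first by left; apply/HLi.
by right; apply/HLs; exists j.
Qed.

End PrevarietyClosure.

Section OrbitKernel.
Variables (A : finType) (C : lang A -> Prop) (M : finType)
  (mul : M -> M -> M) (one : M) (alpha : seq A -> M).
Hypotheses (HC : group_prevariety C) (HM : monoid_laws mul one)
  (Halpha : is_monoid_morphism mul one alpha).

Lemma C_kernel_orbit e s u :
  mul e e = e -> alpha u = e -> C_pair C alpha e s ->
  C_kernel C alpha (mul (mul e s) e).
Proof.
move=> He Hu Hpair [K [CK [K_nil K_sep]]]; apply: Hpair.
have [gT [h [F [Hh HK]]]] := HC.2 K CK.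
have F1 : 1%g \in F by rewrite -Hh.1 -HK; exact: K_nil.
have [v0 v0e hv0] := idempotent_preimage_inverse Halpha Hh He Hu.
pose z := u ++ v0.
have az : alpha z = e by rewrite Halpha.2 Hu v0e He.
have hz : h z = 1%g by rewrite Hh.2 hv0 mulgV.
have K_hF w v : K (z ++ w ++ v) = (h w * h v \in F)%g.
  by rewrite HK Hh.2 hz mul1g Hh.2.
have pieces g : (exists2 v, alpha v = e & h v = g) ->
    exists2 L, C L & L =1 (fun w => h w * g \in F)%g.
  move=> [v _ <-]; exists (fun w => K (z ++ w ++ v)) => [|w].
    exact: prevariety_quotient HC.1 _ _ _ CK.
  exact: K_hF.
have [K' CK' HK'] := prevariety_union_fin HC.1 pieces.
exists K'; split=> //; split=> w.
  move/eqP=> we; apply/HK'; exists (h w)^-1%g; last by rewrite mulgV.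
  exact: idempotent_preimage_inverse Halpha Hh He we.
case/HK'=> _ [v ve <-] Fw; rewrite -K_hF in Fw.
apply: contra (K_sep _ Fw) => /eqP ws.
by rewrite /Defs.preim Halpha.2 az Halpha.2 ve ws HM.1.
Qed.

Lemma C_pair_one_of_kernel x : C_kernel C alpha x -> C_pair C alpha one x.
Proof.
move=> Hx [K [CK [K1 Kx]]]; apply: Hx; exists K; split=> //; split=> // w /eqP ->.
by apply: K1; rewrite /Defs.preim Halpha.1.
Qed.

End OrbitKernel.

Theorem lemma5p10 (A : finType) (C : lang A -> Prop) (M : finType)
  (mul : M -> M -> M) (one : M) (alpha : seq A -> M) :
  group_prevariety C ->
  monoid_laws mul one ->
  is_monoid_morphism mul one alpha ->
  (forall m : M, exists w, alpha w = m) ->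
  (forall e : M, mul e e = e ->
     forall x : M, C_orbit C alpha mul e x -> C_kernel C alpha x) /\
  (forall x : M, C_orbit C alpha mul one x <-> C_kernel C alpha x).
Proof.
move=> HC HM Halpha Hsurj.
have orbit_sub_kernel e : mul e e = e ->
    forall x, C_orbit C alpha mul e x -> C_kernel C alpha x.
  move=> He x [s [Hpair ->]]; have [u Hu] := Hsurj e.
  exact: (C_kernel_orbit HC HM Halpha He Hu Hpair).
split=> // x; split; first by apply: orbit_sub_kernel; rewrite HM.2.1.
move=> Hx; exists x; split; first exact: (C_pair_one_of_kernel Halpha Hx).
by rewrite HM.2.1 HM.2.2.
Qed.
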